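(* Let $n\ge 2$ and let $\mathcal{F}$ be a maximal coclique of $\Gamma_{2n}$. Let $B$ be an $n$-space of $\mathrm{PG}(2n,q)$ that occurs in a flag of $\mathcal{F}$. Then there exists $k\in\{1,\ldots,n+1\}$ such that the number of flags in $\mathcal{F}$ that contain $B$ is precisely $\begin{bmatrix}k\\ 1\end{bmatrix}_q$. Furthermore, this number is $\begin{bmatrix}n+1\\ 1\end{bmatrix}_q$ if and only if every flag $(A',B')\in \mathcal{F}$ satisfies $A'\cap B\neq \emptyset$.
   Context: $\mathrm{PG}(2n,q)$ is the projective space of projective dimension $2n$ over the field of order $q$; an $i$-space is a subspace of projective dimension $i$. An $(n-1,n)$-flag is a pair $(A,B)$ with $A$ an $(n-1)$-space, $B$ an $n$-space and $A\subseteq B$; it ''contains'' $B$ if its $n$-space is $B$. Two such flags $(A_1,B_1),(A_2,B_2)$ are opposite if $A_1\cap B_2=A_2\cap B_1=\emptyset$. $\Gamma_{2n}$ is the graph whose vertices are the $(n-1,n)$-flags, adjacent when opposite; a maximal coclique is an inclusion-maximal set of pairwise non-opposite flags. $\begin{bmatrix}k\\ 1\end{bmatrix}_q=\frac{q^k-1}{q-1}$. *)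

From HB Require Import structures.
From mathcomp Require Import all_boot all_order all_algebra all_field.

Set Implicit Arguments. Unset Strict Implicit. Unset Printing Implicit Defensive.
Import GRing.Theory.
Local Open Scope ring_scope.

(* PG(2n,q) is modelled by the vector space F^(2n+1) (row vectors) over a
   finite field F with q = #|F|.  A projective i-space is a vector subspace
   of dimension i+1.  Subspaces are represented canonically by square
   matrices M with <<M>>%MS = M (the canonical generator of the row space),
   so that distinct subspaces correspond to distinct matrices. *)

Definition pdim (n : nat) : nat := (2 * n).+1.

Definition subsp (F : finFieldType) (n : nat) (M : 'M[F]_(pdim n)) : bool :=
  (<<M>>%MS == M).

Definition pspace (F : finFieldType) (n k : nat) (M : 'M[F]_(pdim n)) : bool :=
  subsp M && (\rank M == k.+1)%N.

Definition flagT (F : finFieldType) (n : nat) : finType :=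
  ('M[F]_(pdim n) * 'M[F]_(pdim n))%type.

Definition is_flag (F : finFieldType) (n : nat) (f : flagT F n) : bool :=
  [&& subsp f.1, (\rank f.1 == n)%N, @pspace F n n f.2 & (f.1 <= f.2)%MS].

Definition pdisjoint (F : finFieldType) (n : nat) (A B : 'M[F]_(pdim n)) : bool :=
  (\rank (A :&: B)%MS == 0)%N.

Definition opposite (F : finFieldType) (n : nat) (f g : flagT F n) : bool :=
  pdisjoint f.1 g.2 && pdisjoint g.1 f.2.

Definition coclique (F : finFieldType) (n : nat) (S : {set flagT F n}) : bool :=
  [forall f in S, is_flag f] && [forall f in S, forall g in S, ~~ opposite f g].

Definition maximal_coclique (F : finFieldType) (n : nat) (S : {set flagT F n}) : Prop :=
  coclique S /\
  forall T : {set flagT F n}, coclique T -> S \subset T -> T = S.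

Definition gauss1 (k q : nat) : nat := ((q ^ k - 1) %/ (q - 1))%N.

From HB Require Import structures.
From mathcomp Require Import all_boot all_order all_algebra all_field.
From mathcomp Require Import zify.
Set Implicit Arguments. Unset Strict Implicit. Unset Printing Implicit Defensive.
Import GRing.Theory.
Local Open Scope ring_scope.

(* Let P be the span of the points B' ∩ B, over the flags (A', B') of the
   coclique whose (n-1)-space A' misses B (such a B' meets B in exactly one
   point, for dimension reasons).  For an (n-1)-space A of B, the flag (A, B)
   is non-opposite to such an (A', B') iff A contains the point B' ∩ B, and it
   is automatically non-opposite to the flags whose A' meets B.  By
   maximality, (A, B) is in the coclique iff P ⊆ A, so the flags through B
   correspond to the hyperplanes of B through P.  Dually these are the points
   of a space of vector dimension n + 1 - dim P, so there are
   [n + 1 - dim P choose 1]_q of them; this is [n + 1 choose 1]_q iff P = 0,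
   i.e. iff every A' meets B. *)

Lemma gauss1K (k q : nat) : (gauss1 k q * (q - 1) = q ^ k - 1)%N.
Proof. by rewrite divnK // !subn1 dvdn_pred_predX. Qed.

Lemma gauss1_unique (k q c : nat) :
  (1 < q)%N -> (c * (q - 1) = q ^ k - 1)%N -> gauss1 k q = c.
Proof.
move=> q_gt1 e; apply/eqP.
by rewrite -(eqn_pmul2r (_ : 0 < q - 1)%N) ?subn_gt0 // gauss1K e.
Qed.

Lemma gauss1_inj (q : nat) : (1 < q)%N -> injective (gauss1 ^~ q).
Proof.
move=> q_gt1 k1 k2 /(congr1 (muln^~ (q - 1)%N)); rewrite /= !gauss1K => e.
apply/eqP; rewrite -(eqn_exp2l _ _ q_gt1).
have q_gt0 : (0 < q)%N by apply: ltnW.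
have : (0 < q ^ k1)%N by rewrite expn_gt0 q_gt0.
have : (0 < q ^ k2)%N by rewrite expn_gt0 q_gt0.
lia.
Qed.

Lemma card_bij_on (T1 T2 : finType) (X1 : {set T1}) (X2 : {set T2})
    (f : T1 -> T2) (g : T2 -> T1) :
  {in X1, forall x, f x \in X2} -> {in X2, forall y, g y \in X1} ->
  {in X1, cancel f g} -> {in X2, cancel g f} -> #|X1| = #|X2|.
Proof.
move=> fX gX fK gK.
have -> : X2 = f @: X1.
  apply/setP => y; apply/idP/imsetP => [yX|[x xX ->]]; last exact: fX.
  by exists (g y); [apply: gX | rewrite gK].
by rewrite card_in_imset //; apply: can_in_inj fK.
Qed.

Section Duality.

Variable F : fieldType.

Definition perpmx p r (U : 'M[F]_(p, r)) : 'M[F]_r := <<kermx U^T>>%MS.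

Lemma mxrank_perpmx p r (U : 'M[F]_(p, r)) : \rank (perpmx U) = (r - \rank U)%N.
Proof. by rewrite mxrank_gen mxrank_ker mxrank_tr. Qed.

Lemma sub_perpmx p1 p2 r (U : 'M[F]_(p1, r)) (V : 'M[F]_(p2, r)) :
  (U <= perpmx V)%MS = (V <= perpmx U)%MS.
Proof.
by rewrite !genmxE !sub_kermx -trmx_eq0 trmx_mul trmxK.
Qed.

Lemma perpmxS p1 p2 r (U : 'M[F]_(p1, r)) (V : 'M[F]_(p2, r)) :
  (U <= V)%MS -> (perpmx V <= perpmx U)%MS.
Proof. by move=> sUV; rewrite sub_perpmx (submx_trans sUV) // sub_perpmx. Qed.

Lemma perpmxK p r (U : 'M[F]_(p, r)) : perpmx (perpmx U) = <<U>>%MS.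
Proof.
have sU : (U <= perpmx (perpmx U))%MS by rewrite sub_perpmx.
have eU : (U :=: perpmx (perpmx U))%MS.
  apply/eqmxP; rewrite -(mxrank_leqif_eq sU) !mxrank_perpmx.
  by have := rank_leq_col U; lia.
by apply: eq_genmx; apply: eqmx_trans (eqmx_sym (genmxE _)) (eqmx_sym eU).
Qed.

End Duality.

Section Counting.

Variable F : finFieldType.
Local Notation q := #|F|.

Definition subspaces_between k p w m (P : 'M[F]_(p, m)) (W : 'M[F]_(w, m)) :
    {set 'M[F]_m} :=
  [set H | [&& <<H>>%MS == H, \rank H == k, (P <= H)%MS & (H <= W)%MS]].

Lemma card_rV_sub w m (W : 'M[F]_(w, m)) :
  #|[set v : 'rV[F]_m | (v <= W)%MS]| = (q ^ \rank W)%N.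
Proof.
have -> : [set v : 'rV[F]_m | (v <= W)%MS] =
          [set x *m row_base W | x in [set: 'rV_(\rank W)]].
  apply/setP => v; rewrite inE; apply/idP/imsetP => [|[x _ ->]].
    by rewrite -(eq_row_base W) => /submxP [x ->]; exists x.
  by rewrite -(eq_row_base W) submxMl.
rewrite card_imset ?cardsT ?card_mx ?mul1n //.
exact/row_free_inj/row_base_free.
Qed.

Lemma card_lines w m (W : 'M[F]_(w, m)) :
  #|subspaces_between 1 (0 : 'M_m) W| = gauss1 (\rank W) q.
Proof.
symmetry; apply: gauss1_unique; first exact: card_finNzRing_gt1.
set Lines := subspaces_between _ _ _.
pose V := [set v : 'rV[F]_m | (v <= W)%MS] :\ 0.
have -> : (q ^ \rank W - 1)%N = #|V|.
  by rewrite -card_rV_sub (cardsD1 0 [set v | _]) inE sub0mx add1n subn1.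
rewrite -(sum1_card (mem V)).
rewrite (partition_big (fun v : 'rV[F]_m => <<v>>%MS) (mem Lines)); last first.
  move=> v; rewrite !inE => /andP [nz_v vW].
  by rewrite genmx_id eqxx mxrank_gen rank_rV nz_v sub0mx genmxE vW.
rewrite -sum_nat_const; apply: eq_bigr => L.
rewrite inE => /and4P [/eqP gL rL _ LW].
pose v0 := nz_row L.
have nz_v0 : v0 != 0 by rewrite nz_row_eq0 -mxrank_eq0 (eqP rL).
have v0L : (v0 :=: L)%MS.
  apply/eqmxP; rewrite -(mxrank_leqif_eq (nz_row_sub L)).
  by rewrite rank_rV nz_v0 (eqP rL).
have <- : #|[set c *: v0 | c in [set~ (0 : F)]]| = (q - 1)%N.
  rewrite card_in_imset ?cardsC1 ?subn1 // => c d _ _ /eqP.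
  by rewrite -subr_eq0 -scalerBl scaler_eq0 (negbTE nz_v0) orbF subr_eq0 => /eqP.
rewrite sum1dep_card; apply: eq_card => v; rewrite !inE.
apply/imsetP/idP => [[c]|/andP [/andP [nz_v vW] /eqP gv]].
  rewrite !inE => c0 ->; rewrite scaler_eq0 (negbTE c0) (negbTE nz_v0) /=.
  rewrite (eq_genmx (eqmx_scale v0 c0)) (eq_genmx v0L) gL eqxx andbT.
  by rewrite (eqmx_scale v0 c0) v0L.
have /sub_rVP [c vc] : (v <= v0)%MS by rewrite v0L -gv genmxE.
by exists c; rewrite // !inE; apply: contraNneq nz_v => c0; rewrite vc c0 scale0r.
Qed.

Lemma card_hyperplanes p r (P : 'M[F]_(p, r)) : (0 < r)%N ->
  #|subspaces_between r.-1 P (1%:M : 'M_r)| = gauss1 (r - \rank P) q.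
Proof.
move=> r_gt0; rewrite -mxrank_perpmx -card_lines.
apply: (card_bij_on (f := @perpmx F r r) (g := @perpmx F r r)).
- move=> K; rewrite !inE => /and4P [/eqP gK rK PK _].
  rewrite genmx_id eqxx mxrank_perpmx (eqP rK) sub0mx perpmxS // andbT.
  by apply/eqP; lia.
- move=> L; rewrite !inE => /and4P [_ rL _ LP].
  rewrite genmx_id eqxx mxrank_perpmx (eqP rL) -sub_perpmx LP submx1 andbT /=.
  by apply/eqP; lia.
- by move=> K; rewrite inE => /and4P [/eqP gK _ _ _]; rewrite perpmxK gK.
- by move=> L; rewrite inE => /and4P [/eqP gL _ _ _]; rewrite perpmxK gL.
Qed.

Lemma card_hyperplanes_in p w m (P : 'M[F]_(p, m)) (W : 'M[F]_(w, m)) :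
  (0 < \rank W)%N -> (P <= W)%MS ->
  #|subspaces_between (\rank W).-1 P W| = gauss1 (\rank W - \rank P) q.
Proof.
(* Coordinates in the basis row_base W identify the subspaces of W with
   those of F^(\rank W). *)
move=> W_gt0 PW; pose R := row_base W.
have R_free : row_free R := row_base_free W.
have RK k (H : 'M[F]_(k, m)) : (H <= W)%MS -> H *m pinvmx R *m R = H.
  by move=> HW; apply: mulmxKpV; rewrite eq_row_base.
have <- : \rank (P *m pinvmx R) = \rank P by rewrite -(mxrankMfree _ R_free) RK.
rewrite -card_hyperplanes //.
apply: (card_bij_on (f := fun H => <<H *m pinvmx R>>%MS)
                    (g := fun K => <<K *m R>>%MS)).
- move=> H; rewrite !inE => /and4P [_ rH PH HW].
  rewrite genmx_id eqxx mxrank_gen -(mxrankMfree _ R_free) RK // rH.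
  by rewrite genmxE submxMr ?submx1.
- move=> K; rewrite !inE => /and4P [/eqP gK rK PK _].
  rewrite genmx_id eqxx mxrank_gen mxrankMfree // rK.
  rewrite !genmxE -{1}(RK _ P PW) submxMr /=.
    by rewrite (submx_trans (submxMl K R)) // eq_row_base.
  by rewrite -gK genmxE in PK.
- move=> H; rewrite inE => /and4P [/eqP gH _ _ HW].
  by rewrite (eq_genmx (eqmxMr _ (genmxE _))) RK // gH.
- move=> K; rewrite inE => /and4P [/eqP gK _ _ _].
  by rewrite (eq_genmx (eqmxMr _ (genmxE _))) mulmxKp // gK.
Qed.

End Counting.

Section Meets.

Variable F : fieldType.

Lemma mxrank_cap_flag_point n (A' B' B : 'M[F]_(pdim n)) :
  \rank A' = n -> \rank B' = n.+1 -> \rank B = n.+1 -> (A' <= B')%MS ->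
  \rank (A' :&: B)%MS = 0%N -> \rank (B' :&: B)%MS = 1%N.
Proof.
move=> rA' rB' rB sA'B' A'B0.
have := mxrank_sum_cap A' B; have := mxrank_sum_cap B' B.
have : (\rank (A' + B)%MS <= \rank (B' + B)%MS)%N by rewrite mxrankS ?addsmxS.
have : (\rank (B' + B)%MS <= pdim n)%N := rank_leq_col _.
rewrite rA' rB' rB A'B0 /pdim; lia.
Qed.

Lemma capmx_point_neq0 m (A B B' : 'M[F]_m) :
  (A <= B)%MS -> \rank (B' :&: B)%MS = 1%N ->
  (\rank (A :&: B')%MS != 0)%N = (B' :&: B <= A)%MS.
Proof.
move=> sAB rB'B; apply/idP/idP => [AB'_neq0|B'B_A].
  have sAB'_B'B : (A :&: B' <= B' :&: B)%MS.
    by rewrite sub_capmx capmxSr (submx_trans (capmxSl _ _) sAB).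
  have : (A :&: B' == B' :&: B)%MS.
    rewrite -(mxrank_leqif_eq sAB'_B'B) rB'B.
    by have := mxrankS sAB'_B'B; rewrite rB'B; lia.
  by case/andP => _ /submx_trans->; rewrite ?capmxSl.
have : (B' :&: B <= A :&: B')%MS by rewrite sub_capmx B'B_A capmxSl.
by move/mxrankS; rewrite rB'B; lia.
Qed.

End Meets.

Lemma opposite_sym (F : finFieldType) n (f g : flagT F n) :
  opposite f g = opposite g f.
Proof. exact: andbC. Qed.

Lemma flag_not_self_opposite (F : finFieldType) n (f : flagT F n) :
  (0 < n)%N -> is_flag f -> ~~ opposite f f.
Proof.
move=> n_gt0 /and4P [_ /eqP rf1 _ sf12]; rewrite /opposite andbb /pdisjoint.
by rewrite -lt0n (capmx_idPl sf12) rf1.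
Qed.

Section MaximalCoclique.

Variables (F : finFieldType) (n : nat) (S : {set flagT F n}).
Hypotheses (n_gt0 : (0 < n)%N) (S_max : maximal_coclique S).

Lemma coclique_is_flag f : f \in S -> is_flag f.
Proof. by case: S_max => /andP [/forall_inP S_flag _] _; apply: S_flag. Qed.

Lemma coclique_not_opposite f g : f \in S -> g \in S -> ~~ opposite f g.
Proof.
case: S_max => /andP [_ /forall_inP S_nopp] _ fS gS.
exact: (forall_inP (S_nopp f fS)).
Qed.

Lemma maximal_coclique_mem f :
  is_flag f -> {in S, forall g, ~~ opposite f g} -> f \in S.
Proof.
move=> f_flag f_nopp; case: S_max => _ S_maxT.
have coT : coclique (f |: S).
  apply/andP; split; apply/forall_inP => g /setU1P [->|gS].
  - exact: f_flag.
  - exact: coclique_is_flag.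
  - apply/forall_inP => h /setU1P [->|hS]; last exact: f_nopp.
    exact: flag_not_self_opposite.
  - apply/forall_inP => h /setU1P [->|hS]; last exact: coclique_not_opposite.
    by rewrite opposite_sym f_nopp.
by rewrite -(S_maxT _ coT (subsetUr _ _)) setU11.
Qed.

Variable B : 'M[F]_(pdim n).
Hypothesis B_space : pspace n B.

Definition trace_span := (\sum_(f in S | pdisjoint f.1 B) (f.2 :&: B))%MS.

Lemma trace_span_subB : (trace_span <= B)%MS.
Proof. by apply/sumsmx_subP => f _; apply: capmxSr. Qed.

Lemma disjoint_flag_point g :
  g \in S -> pdisjoint g.1 B -> \rank (g.2 :&: B)%MS = 1%N.
Proof.
move=> gS /eqP g1B.
case/and4P: (coclique_is_flag gS) => _ /eqP rg1 /andP [_ /eqP rg2] sg12.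
case/andP: B_space => _ /eqP rB.
exact: mxrank_cap_flag_point rg1 rg2 rB sg12 g1B.
Qed.

Lemma not_oppositeE A g : (A <= B)%MS -> g \in S ->
  ~~ opposite (A, B) g = (pdisjoint g.1 B ==> (g.2 :&: B <= A)%MS).
Proof.
move=> sAB gS; rewrite /opposite /=.
case g1B: (pdisjoint g.1 B); last by rewrite andbF.
by rewrite andbT /pdisjoint (capmx_point_neq0 sAB (disjoint_flag_point gS g1B)).
Qed.

Lemma trace_span_sub A : (A <= B)%MS ->
  (trace_span <= A)%MS = [forall g in S, ~~ opposite (A, B) g].
Proof.
move=> sAB; apply/sumsmx_subP/forall_inP => [sub_A g gS|nopp g /andP [gS g1B]].
  by rewrite not_oppositeE //; apply/implyP => g1B; apply: sub_A; rewrite gS.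
by have := nopp g gS; rewrite not_oppositeE // g1B.
Qed.

Lemma mem_coclique_through A :
  is_flag (A, B) -> ((A, B) \in S) = (trace_span <= A)%MS.
Proof.
move=> AB_flag; have /and4P [_ _ _ sAB] := AB_flag.
rewrite trace_span_sub //; apply/idP/forall_inP => [ABS g gS|nopp].
  exact: coclique_not_opposite.
exact: maximal_coclique_mem.
Qed.

Lemma card_coclique_through :
  #|[set f in S | f.2 == B]| = gauss1 (n.+1 - \rank trace_span) #|F|.
Proof.
case/andP: B_space => _ /eqP rB.
rewrite -rB -card_hyperplanes_in ?rB ?trace_span_subB //.
apply: (card_bij_on (f := fst) (g := fun H => (H, B))).
- move=> [A B']; rewrite !inE => /andP [AS /eqP /= B'B]; rewrite B'B in AS *.
  have AB_flag := coclique_is_flag AS; case/and4P: (AB_flag) => gA rA _ sAB.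
  by rewrite -(mem_coclique_through AB_flag) AS rA [_ == A]gA.
- move=> H; rewrite !inE => /and4P [gH rH PH sHB].
  have HB_flag : is_flag (H, B) by rewrite /is_flag /= /subsp gH rH B_space sHB.
  by rewrite eqxx andbT mem_coclique_through.
- by move=> [A B']; rewrite inE => /andP [_ /eqP /= ->].
- by [].
Qed.

Lemma trace_span_eq0 :
  \rank trace_span = 0%N <-> (forall f : flagT F n, f \in S -> ~~ pdisjoint f.1 B).
Proof.
split => [P0 f fS|meets]; last first.
  apply/eqP; rewrite mxrank_eq0 -submx0.
  by apply/sumsmx_subP => f /andP [/meets/negbTE->].
apply/negP => f1B.
have : (f.2 :&: B <= trace_span)%MS by apply: (sumsmx_sup f); rewrite ?fS.
by move/mxrankS; rewrite P0 disjoint_flag_point.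
Qed.

End MaximalCoclique.

Theorem mainTheorem3 (F : finFieldType) (n : nat) (S : {set flagT F n})
  (B : 'M[F]_(pdim n)) :
  (2 <= n)%N ->
  maximal_coclique S ->
  (exists A : 'M[F]_(pdim n), (A, B) \in S) ->
  (exists k : nat,
     [/\ (1 <= k)%N, (k <= n.+1)%N &
         #|[set f in S | f.2 == B]| = gauss1 k #|F|]) /\
  (#|[set f in S | f.2 == B]| = gauss1 n.+1 #|F| <->
   (forall f : flagT F n, f \in S -> ~~ pdisjoint f.1 B)).
Proof.
move=> n_ge2 S_max [A0 A0B_S]; have n_gt0 : (0 < n)%N by apply: ltnW.
have /and4P [_ /eqP rA0 B_space _] := coclique_is_flag S_max A0B_S.
have rP : (\rank (trace_span S B) <= n)%N.
  rewrite -[X in (_ <= X)%N]rA0 mxrankS //.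
  rewrite -(mem_coclique_through n_gt0 S_max B_space) //.
  exact: coclique_is_flag A0B_S.
rewrite (card_coclique_through n_gt0 S_max B_space) -(trace_span_eq0 S_max B_space).
split; first by exists (n.+1 - \rank (trace_span S B))%N; split => //; lia.
split => [/(gauss1_inj (card_finNzRing_gt1 F))|->]; last by rewrite subn0.
lia.
Qed.
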